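(* Let $a, c \in \mathbb{N}$ and $b, d \in \mathbb{Z}$. (i) Suppose $a\neq c$. Then $\chi(G_{a,b,c,d}) \le \left\lceil \frac{\log \alpha\beta}{\log\alpha}\right\rceil$ for any real numbers $1<\alpha<\beta$ satisfying $R_{a,b,c,d}\subseteq (\beta^{-1},\alpha^{-1})\cup(\alpha,\beta)$. (ii) Suppose $a=c$. If there exists a prime $p$ with $v_p(a)>\max\{v_p(b),v_p(d)\}$ and $v_p(b)=v_p(d)$, then $\chi(G_{a,b,c,d})\le p^{v_p(b-d)}(p-1)$. (iii) Suppose $a=c$. If there exists a prime $p$ with $v_p(a)>\max\{v_p(b),v_p(d)\}$ and $v_p(b)\neq v_p(d)$, then $\chi(G_{a,b,c,d})=2$.
   Context: $\mathbb{N}=\{1,2,\dots\}$. For $a,c\in\mathbb{N}$, $b,d\in\mathbb{Z}$, $R_{a,b,c,d} := \left\{ \frac{an+b}{cn+d} : n \in \mathbb{N} \right\} \cap (\mathbb{Q}_{>0}\setminus\{1\})$. For non-empty $R\subseteq\mathbb{Q}_{>0}\setminus\{1\}$, $G(R)$ is the graph with vertex set $\mathbb{N}$ and edge set $\{\{m,n\}: m/n\in R\}$; $G_{a,b,c,d}:=G(R_{a,b,c,d})$. $\chi$ denotes chromatic number, $v_p$ the $p$-adic valuation (with $v_p(0)=\infty$). *)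

From HB Require Import structures.
From mathcomp Require Import all_boot all_order all_algebra.
From mathcomp Require Import reals exp.
Set Implicit Arguments. Unset Strict Implicit. Unset Printing Implicit Defensive.
Import Order.TTheory GRing.Theory Num.Theory.
Local Open Scope ring_scope.

Definition Rset (a : nat) (b : int) (c : nat) (d : int) (q : rat) : Prop :=
  (exists n : nat, (0 < n)%N /\ (c%:Z * n%:Z + d != 0) /\
     q = (a%:Z * n%:Z + b)%:~R / (c%:Z * n%:Z + d)%:~R)
  /\ 0 < q /\ q != 1.

Definition adj (R : rat -> Prop) (m n : nat) : Prop :=
  (0 < m)%N /\ (0 < n)%N /\ (R (m%:R / n%:R) \/ R (n%:R / m%:R)).

Definition colorable (R : rat -> Prop) (k : nat) : Prop :=
  exists f : nat -> 'I_k, forall m n, adj R m n -> f m <> f n.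

Definition G (a : nat) (b : int) (c : nat) (d : int) := Rset a b c d.

(* p-adic valuation on int, with v_p(0) = infinity (encoded as None). *)
Definition vp (p : nat) (z : int) : option nat :=
  if z == 0 then None else Some (logn p `|z|%N).

Definition vlt (x y : option nat) : bool :=
  match x, y with
  | Some m, Some n => (m < n)%N
  | Some _, None => true
  | None, _ => false
  end.

Definition vmax (x y : option nat) : option nat :=
  match x, y with
  | Some m, Some n => Some (maxn m n)
  | _, _ => None
  end.

Definition colorable_pow (R : rat -> Prop) (p : nat) (e : option nat) : Prop :=
  match e with
  | Some k => colorable R (p ^ k * (p - 1))
  | None => True
  end.

(* For (i), colour n by floor(log_alpha n) mod k: an edge m/n in (alpha, beta)
   moves floor(log_alpha) by a positive amount below k = ceil(log_alpha(alpha beta)).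
   For a = c, an edge m/n = (at+b)/(at+d) gives m(at+d) = n(at+b), and since v_p(a)
   exceeds v_p(b) and v_p(d), v_p(at+b) = v_p(b) and v_p(at+d) = v_p(d); hence
   v_p(m) - v_p(n) = v_p(b) - v_p(d).  In (iii) this is a fixed k <> 0, so the parity
   of floor(v_p(n)/|k|) is a proper 2-colouring.  In (ii) v_p(m) = v_p(n), the p'-parts
   satisfy (m' - n')(at+d) = n'(b-d), so with s = v_p(b-d) the residues of m' and n'
   modulo p^(s+1) differ; these residues are coprime to p, giving
   phi(p^(s+1)) = p^s(p-1) colours. *)

From HB Require Import structures.
From mathcomp Require Import all_boot all_order all_algebra.
From mathcomp Require Import reals exp.
From mathcomp Require Import zify lra.
Set Implicit Arguments.
Unset Strict Implicit.
Unset Printing Implicit Defensive.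

Import Order.TTheory GRing.Theory Num.Theory.
Local Open Scope ring_scope.

Lemma colorable_ratio (Q : rat -> Prop) (k : nat) (f : nat -> 'I_k) :
  (forall m n, (0 < m)%N -> (0 < n)%N -> Q (m%:R / n%:R) -> f m <> f n) ->
  colorable Q k.
Proof.
by move=> hf; exists f => m n [m0 [n0 [|/hf hnm]]]; [exact: hf | move=> /esym; exact: hnm].
Qed.

Lemma colorable_potential (Q : rat -> Prop) (k : nat) (g : nat -> int) :
  (0 < k)%N ->
  (forall m n, (0 < m)%N -> (0 < n)%N -> Q (m%:R / n%:R) -> (0 < `|g m - g n| < k)%N) ->
  colorable Q k.
Proof.
move=> k_gt0 hg.
have k_neq0 : k%:Z != 0 by rewrite eqz_nat -lt0n.
have mod_lt z : (`|(z %% k)%Z| < k)%N.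
  by rewrite -ltz_nat gez0_abs ?modz_ge0 ?ltz_pmod.
apply: (@colorable_ratio Q k (fun n => Ordinal (mod_lt (g n)))) => m n m0 n0 /(hg m n m0 n0).
case/andP=> gap_gt0 gap_lt /(congr1 (fun i : 'I_k => Posz i)) /=.
rewrite !gez0_abs ?modz_ge0 // => /eqP.
rewrite eqz_mod_dvd /dvdz absz_nat => /(dvdn_leq gap_gt0).
by rewrite leqNgt gap_lt.
Qed.

Lemma colorable_finset (Q : rat -> Prop) (T : finType) (A : {set T}) (f : nat -> T) :
  (forall n, (0 < n)%N -> f n \in A) ->
  (forall m n, (0 < m)%N -> (0 < n)%N -> Q (m%:R / n%:R) -> f m <> f n) ->
  colorable Q #|A|.
Proof.
move=> fA hf; have fA1 := fA 1%N isT.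
apply: (@colorable_ratio Q _ (fun n => enum_rank_in fA1 (f n))) => m n m0 n0 /(hf m n m0 n0) hmn.
by move/(congr1 enum_val); rewrite !enum_rankK_in ?fA.
Qed.

Lemma card_coprime_ord n : #|[set i : 'I_n | coprime n i]| = totient n.
Proof.
rewrite totient_count_coprime big_mkord -sum1_card big_mkcond /=.
by apply: eq_bigr => i _; rewrite inE; case: coprime.
Qed.

Lemma floor_sub_bounds (R : archiRealDomainType) (x y L : R) :
  1 <= y - x -> y - x <= L -> 0 < Num.floor y - Num.floor x < Num.ceil (L + 1).
Proof.
move=> gap_ge1 gap_le.
have floor_lt : Num.floor x + 1 <= Num.floor y.
  by rewrite floor_ge_int intrD; have := floor_le x; lra.
have gap_lt : (Num.floor y - Num.floor x)%:~R < (Num.ceil (L + 1))%:~R :> R.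
  have := floorD1_gt x; have := floor_le y; have := ceil_ge (L + 1).
  by rewrite intrB intrD; lra.
by rewrite ltr_int in gap_lt; rewrite gap_lt andbT; lia.
Qed.

Lemma floor_ln_ratio_gap (R : realType) (al be x y : R) :
  1 < al -> 0 < x -> 0 < y -> al < x / y < be ->
  0 < Num.floor (ln x / ln al) - Num.floor (ln y / ln al) < Num.ceil (ln (al * be) / ln al).
Proof.
move=> al_gt1 x_gt0 y_gt0 /andP[al_lt be_gt].
have al_gt0 : 0 < al by lra.
have be_gt0 : 0 < be by lra.
have lnal_gt0 : 0 < ln al by apply: ln_gt0.
have lnxy : ln x / ln al - ln y / ln al = ln (x / y) / ln al.
  by rewrite ln_div ?posrE // mulrBl.
have -> : ln (al * be) / ln al = ln be / ln al + 1.
  by rewrite lnM ?posrE // mulrDl divff ?gt_eqF // addrC.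
apply: floor_sub_bounds; rewrite lnxy.
  by rewrite ler_pdivlMr // mul1r ltW // ltr_ln ?posrE ?divr_gt0.
by rewrite ler_pM2r ?invr_gt0 // ltW // ltr_ln ?posrE ?divr_gt0.
Qed.

Lemma colorable_band (Q : rat -> Prop) (R : realType) (al be : R) :
  1 < al -> al < be ->
  (forall q, Q q -> (be^-1 < ratr q < al^-1) \/ (al < ratr q < be)) ->
  colorable Q `|Num.ceil (ln (al * be) / ln al)|%N.
Proof.
move=> al_gt1 al_lt_be inQ.
have al_gt0 : 0 < al by lra.
have be_gt0 : 0 < be by lra.
set K := Num.ceil _.
pose g (n : nat) := Num.floor (ln (n%:R : R) / ln al).
have gap m n : (0 < m)%N -> (0 < n)%N -> al < m%:R / n%:R < be -> 0 < g m - g n < K.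
  by move=> m0 n0; apply: floor_ln_ratio_gap; rewrite ?ltr0n.
have K_gt0 : 0 < K.
  rewrite ceil_gt0 divr_gt0 ?ln_gt0 //.
  by rewrite -[1]mulr1 ltr_pM ?ler01 //; lra.
apply: (@colorable_potential Q _ g); first by lia.
move=> m n m0 n0 /inQ; rewrite fmorph_div !rmorph_nat.
have mR : 0 < m%:R :> R by rewrite ltr0n.
have nR : 0 < n%:R :> R by rewrite ltr0n.
case=> [/andP[lo hi] | band].
  have /gap : al < n%:R / m%:R < be.
    rewrite -invf_div -[al]invrK -[be]invrK.
    by rewrite !ltf_pV2 ?posrE ?invr_gt0 ?divr_gt0 // hi lo.
  by move=> /(_ n0 m0); lia.
by move: (gap m n m0 n0 band); lia.
Qed.

Lemma Rset_cross_mul a b d (m n : nat) : (0 < n)%N -> Rset a b a d (m%:R / n%:R) ->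
  exists t : nat, [/\ a%:Z * t + b != 0, a%:Z * t + d != 0 &
    m%:Z * (a%:Z * t + d) = n%:Z * (a%:Z * t + b)].
Proof.
move=> n0 [[t [_ [dt_neq0 mn_eq]]] [q_gt0 _]].
have bt_neq0 : a%:Z * t + b != 0.
  by apply: contraTneq q_gt0 => bt0; rewrite (mn_eq : _ = _) bt0 mul0r ltxx.
exists t; split=> //.
move/eqP: mn_eq; rewrite eqr_div ?intr_eq0 ?pnatr_eq0 -?lt0n //.
by rewrite !pmulrn -!intrM eqr_int [RHS]mulrC => /eqP.
Qed.

Lemma ndvdz_pfactor_logn p (z : int) : prime p -> z != 0 ->
  ~~ ((p ^ (logn p `|z|).+1)%:Z %| z)%Z.
Proof. by move=> p_pr z0; rewrite dvdzE absz_nat pfactor_dvdn ?absz_gt0 // ltnn. Qed.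

Lemma logn_absz_addl p (x y : int) : prime p -> y != 0 ->
  ((p ^ (logn p `|y|).+1)%:Z %| x)%Z -> logn p `|x + y| = logn p `|y|.
Proof.
move=> p_pr y0 dvd_x; set e := logn p `|y|.
have dvd_xy : ((p ^ e.+1)%:Z %| x + y)%Z = ((p ^ e.+1)%:Z %| y)%Z := rpredDl _ dvd_x.
have xy0 : x + y != 0.
  by apply/eqP=> xy0; move: (ndvdz_pfactor_logn p_pr y0); rewrite -dvd_xy xy0 dvdz0.
have ndvd_xy : ~~ ((p ^ e.+1)%:Z %| x + y)%Z by rewrite dvd_xy ndvdz_pfactor_logn.
have dvd_e : ((p ^ e)%:Z %| x + y)%Z.
  apply: rpredD; last by rewrite dvdzE absz_nat pfactor_dvdn ?absz_gt0.
  by apply: dvdz_trans dvd_x; rewrite dvdzE !absz_nat dvdn_exp2l.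
move: dvd_e ndvd_xy; rewrite !dvdzE !absz_nat !pfactor_dvdn ?absz_gt0 //.
lia.
Qed.

Lemma divz_dist1 (x y : int) (k : nat) : (0 < k)%N -> `|x - y|%N = k ->
  `|(x %/ k)%Z - (y %/ k)%Z|%N = 1%N.
Proof.
move=> k0 dist; have k_neq0 : k%:Z != 0 by rewrite eqz_nat -lt0n.
have [->|->] : x = 1 * k%:Z + y \/ y = 1 * k%:Z + x by lia.
  by rewrite divzMDl // addrK.
by rewrite divzMDl // [1 + _]addrC opprD addrA subrr add0r.
Qed.

Lemma ndvdz_cross_mul_sub p (x y z b d : int) : prime p -> coprime p `|y| -> b != d ->
  x * (z + d) = y * (z + b) -> ~~ ((p ^ (logn p `|b - d|).+1)%:Z %| x - y)%Z.
Proof.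
move=> p_pr cop_py bd cross.
have diff : (x - y) * (z + d) = y * (b - d).
  by rewrite mulrBl cross -mulrBr opprD addrACA subrr add0r.
apply: contra (ndvdz_pfactor_logn p_pr (_ : b - d != 0)) => [dvd_xy|]; last by rewrite subr_eq0.
rewrite -(@Gauss_dvdzr _ y); last by rewrite coprimezE /= coprimeXl.
by rewrite -diff dvdz_mulr.
Qed.

Section SmallValuations.

Variables (p a : nat) (b d : int).
Hypotheses (p_pr : prime p) (b_neq0 : b != 0) (d_neq0 : d != 0).
Hypotheses (vb_lt : (logn p `|b| < logn p a)%N) (vd_lt : (logn p `|d| < logn p a)%N).

Lemma logn_absz_dvdDl (z y : int) : (a%:Z %| z)%Z -> y != 0 ->
  (logn p `|y| < logn p a)%N -> logn p `|z + y| = logn p `|y|.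
Proof.
move=> dvd_az y0 vy_lt; apply: logn_absz_addl => //; apply: dvdz_trans dvd_az.
have a_gt0 : (0 < a)%N by rewrite lt0n; apply: contraTneq vy_lt => ->; rewrite logn0.
by rewrite dvdzE !absz_nat pfactor_dvdn.
Qed.

Lemma logn_edge (m n t : nat) : (0 < m)%N -> (0 < n)%N ->
  a%:Z * t + b != 0 -> a%:Z * t + d != 0 ->
  m%:Z * (a%:Z * t + d) = n%:Z * (a%:Z * t + b) ->
  (logn p m + logn p `|d| = logn p n + logn p `|b|)%N.
Proof.
move=> m0 n0 bt0 dt0 /(congr1 (fun z => logn p `|z|)).
by rewrite !abszM !absz_nat !lognM ?absz_gt0 // !logn_absz_dvdDl ?dvdz_mulr.
Qed.

Lemma colorable2_logn_neq : logn p `|b| != logn p `|d| -> colorable (Rset a b a d) 2.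
Proof.
move=> vbd; set k := `|(logn p `|b|)%:Z - (logn p `|d|)%:Z|%N.
have k_gt0 : (0 < k)%N by rewrite absz_gt0 subr_eq0 eqz_nat.
apply: (@colorable_potential _ _ (fun n => ((logn p n)%:Z %/ k)%Z)) => // m n m0 n0.
case/(Rset_cross_mul n0)=> t [bt0 dt0 cross].
rewrite divz_dist1 //; have := logn_edge m0 n0 bt0 dt0 cross; lia.
Qed.

Lemma colorable_logn_eq : logn p `|b| = logn p `|d| -> b != d ->
  colorable (Rset a b a d) (p ^ logn p `|b - d| * (p - 1)).
Proof.
move=> vbd bd; set s := logn p `|b - d|.
have P_gt0 : (0 < p ^ s.+1)%N by rewrite expn_gt0 prime_gt0.
have -> : (p ^ s * (p - 1) = #|[set i : 'I_(p ^ s.+1) | coprime (p ^ s.+1) i]|)%N.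
  by rewrite card_coprime_ord totient_pfactor // mulnC subn1.
apply: (@colorable_finset _ _ _ (fun n => Ordinal (ltn_pmod n`_p^' P_gt0))) => [n _|m n m0 n0].
  rewrite inE /= coprime_modr coprimeXl // (pnat_coprime (pnat_id p_pr)) //.
  exact: part_pnat.
case/(Rset_cross_mul n0)=> t [bt0 dt0 cross] /(congr1 val) /= /eqP.
have lognmn : logn p m = logn p n by have := logn_edge m0 n0 bt0 dt0 cross; rewrite vbd; lia.
have part_eq : (m`_p = n`_p)%N by rewrite !p_part lognmn.
have cross' : (m`_p^')%:Z * (a%:Z * t + d) = (n`_p^')%:Z * (a%:Z * t + b).
  move: cross; rewrite -{1}(partnC p m0) -{1}(partnC p n0) !PoszM -!mulrA part_eq.
  by apply: mulfI; rewrite eqz_nat -lt0n part_gt0.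
rewrite -eqz_nat -!modz_nat eqz_mod_dvd; apply/negP.
apply: ndvdz_cross_mul_sub cross' => //.
by rewrite absz_nat (pnat_coprime (pnat_id p_pr)) // part_pnat.
Qed.

End SmallValuations.

Lemma Rset_ratio_exists a b d : (0 < a)%N -> b != d ->
  exists m n : nat, [/\ (0 < m)%N, (0 < n)%N & Rset a b a d (m%:R / n%:R)].
Proof.
move=> a_gt0 bd; pose t := (`|b| + `|d|).+1.
have t_le : t%:Z <= a%:Z * t%:Z by rewrite -PoszM lez_nat leq_pmull.
have t_gt : `|b|%:Z + `|d|%:Z < t%:Z by rewrite -PoszD ltz_nat.
have bt_gt0 : 0 < a%:Z * t + b by lia.
have dt_gt0 : 0 < a%:Z * t + d by lia.
have ratio : `|a%:Z * t + b|%:R / `|a%:Z * t + d|%:R =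
    (a%:Z * t + b)%:~R / (a%:Z * t + d)%:~R :> rat.
  by rewrite !natr_absz !ger0_norm ?ltW.
exists (absz (a%:Z * t + b)), (absz (a%:Z * t + d)); rewrite ratio; split.
- by rewrite absz_gt0 gt_eqF.
- by rewrite absz_gt0 gt_eqF.
split; first by exists t; rewrite gt_eqF.
split; first by rewrite divr_gt0 ?ltr0z.
by apply: contra_neq bd => /divr1_eq /intr_inj /addrI.
Qed.

Lemma not_colorable1 (Q : rat -> Prop) (m n : nat) :
  (0 < m)%N -> (0 < n)%N -> Q (m%:R / n%:R) -> ~ colorable Q 1.
Proof.
move=> m0 n0 Qmn [f hf]; apply: (hf m n); first by split; [|split; [|left]].
by rewrite (ord1 (f m)) (ord1 (f n)).
Qed.

Lemma vlt_vmax_vp p (a : nat) (b d : int) : (0 < a)%N ->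
  vlt (vmax (vp p b) (vp p d)) (vp p a%:Z) ->
  [/\ b != 0, d != 0, (logn p `|b| < logn p a)%N & (logn p `|d| < logn p a)%N].
Proof.
move=> a_gt0; rewrite /vlt /vmax /vp (negbTE (_ : a%:Z != 0)) -?lt0n //.
by case: eqP => // /eqP b0; case: eqP => // /eqP d0; rewrite gtn_max => /andP[].
Qed.

Theorem theorem2p1 (a : nat) (b : int) (c : nat) (d : int) :
  (0 < a)%N -> (0 < c)%N ->
  (* (i) *)
  (a <> c ->
     forall (R : realType) (alpha beta : R), 1 < alpha -> alpha < beta ->
       (forall q : rat, Rset a b c d q ->
          (beta^-1 < ratr q < alpha^-1) \/ (alpha < ratr q < beta)) ->
       colorable (G a b c d) `|Num.ceil (ln (alpha * beta) / ln alpha)|%N)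
  /\
  (* (ii) *)
  (a = c -> forall p : nat, prime p ->
     vlt (vmax (vp p b) (vp p d)) (vp p a%:Z) -> vp p b = vp p d ->
     colorable_pow (G a b c d) p (vp p (b - d)))
  /\
  (* (iii) *)
  (a = c -> forall p : nat, prime p ->
     vlt (vmax (vp p b) (vp p d)) (vp p a%:Z) -> vp p b <> vp p d ->
     colorable (G a b c d) 2 /\ ~ colorable (G a b c d) 1).
Proof.
move=> a_gt0 _; split; [|split].
- by move=> _ R al be al_gt1 al_lt_be band; apply: colorable_band.
- move=> <- p p_pr /(vlt_vmax_vp a_gt0) [b0 d0 vb_lt vd_lt].
  rewrite /colorable_pow {1 2}/vp (negbTE b0) (negbTE d0) => -[vbd].
  rewrite /vp; case: eqP => // /eqP; rewrite subr_eq0 => bd.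
  exact: colorable_logn_eq.
- move=> <- p p_pr /(vlt_vmax_vp a_gt0) [b0 d0 vb_lt vd_lt].
  rewrite /vp (negbTE b0) (negbTE d0) => vbd.
  have {}vbd : logn p `|b| != logn p `|d| by apply: contra_notN vbd => /eqP ->.
  have bd : b != d by apply: contraNneq vbd => ->.
  have [m [n [m0 n0 Qmn]]] := Rset_ratio_exists a_gt0 bd.
  split; first exact: colorable2_logn_neq p_pr b0 d0 vb_lt vd_lt vbd.
  exact: not_colorable1 m0 n0 Qmn.
Qed.
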